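(* Let $\mathbb X$ be a flow space and $x_\bullet\in\mathbb X$. If $\mathbb X$ is not dense at $x_\bullet$, then $\mathbb X$ does not admit an expansion about $x_\bullet$.
   Context: A flow space is a compact metrizable space $\mathbb X$ of topological dimension one with a continuous action $(t,x)\mapsto t.x$ of $\mathbb R$ without fixed points; orbits are oriented by increasing $t$. $\mathbb X$ is dense at $x\in\mathbb X$ if every neighbourhood of $x$ contains a point of the forward orbit $\{t.y:t>0\}$ of every $y\in\mathbb X$. $W_k$ is a wedge of $k$ circles with a chosen orientation on each circle. A positive map $f\colon W_m\to W_k$ is a continuous surjection sending wedge point to wedge point, preserving the orientation of each circle, and locally injective at every point other than the wedge point. A projection $p\colon\mathbb X\to W_k$ is a continuous surjection which is locally injective along orbits (each $x$ has $\epsilon_x>0$ with $p$ injective on $\{t.x:|t|<\epsilon_x\}$) and orientation preserving along orbits. An expansion of $\mathbb X$ about $x_\bullet$ consists of oriented wedges of circles $X_i$ ($i\ge1$) with wedge points $x_i$, positive maps $f_i\colon X_{i+1}\to X_i$, and projections $p_i\colon\mathbb X\to X_i$ with $p_i(x_\bullet)=x_i$, such that $p_n=f_{n,m}\circ p_m$ for all $m>n$, where $f_{n,m}=f_n\circ f_{n+1}\circ\cdots\circ f_{m-1}\colon X_m\to X_n$, and such that $x\mapsto(p_i(x))_{i\ge1}$ is a homeomorphism from $\mathbb X$ onto the inverse limit $\{(z_i)\in\prod_i X_i : z_i=f_i(z_{i+1})\ \forall i\}$. *)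

From HB Require Import structures.
From mathcomp Require Import all_boot all_order all_algebra.
From mathcomp Require Import all_classical all_reals all_analysis.
From mathcomp Require Import Rstruct Rstruct_topology.
Set Implicit Arguments. Unset Strict Implicit. Unset Printing Implicit Defensive.
Import Order.TTheory GRing.Theory Num.Theory.
Local Open Scope classical_set_scope.
Local Open Scope ring_scope.

Notation RR := Rdefinitions.R.

Definition covdim_le (T : topologicalType) (n : nat) : Prop :=
  forall (a : nat) (U : 'I_a -> set T),
    (forall i, open (U i)) -> (forall x : T, exists i, U i x) ->
    exists (b : nat) (V : 'I_b -> set T),
      [/\ (forall j, open (V j)),
          (forall x : T, exists j, V j x),
          (forall j, exists i, V j `<=` U i) &
          (forall J : seq 'I_b, uniq J -> size J = n.+2 ->
             ~ exists x : T, forall j, j \in J -> V j x)].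

Definition topdim_one (T : topologicalType) : Prop :=
  covdim_le T 1 /\ ~ covdim_le T 0.

(* T is a pseudometric space (so its topology is metric-induced);
   together with Hausdorffness this is "metrizable". *)
Definition is_flow (T : pseudoMetricType RR) (act : RR -> T -> T) : Prop :=
  [/\ continuous (fun q : RR * T => act q.1 q.2),
      (forall x, act 0 x = x),
      (forall s t x, act s (act t x) = act (s + t) x) &
      (forall x, exists t, act t x <> x)].

Definition flow_space (T : pseudoMetricType RR) (act : RR -> T -> T) : Prop :=
  [/\ compact [set: T], hausdorff_space T, topdim_one T & is_flow act].

Definition dense_at (T : pseudoMetricType RR) (act : RR -> T -> T) (x : T) :=
  forall N : set T, nbhs x N -> forall y : T, exists2 t : RR, 0 < t & N (act t y).

(* The j-th circle (j < k) is the circle of radius j+1 centred at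
   (j+1, 0); all these circles meet exactly at the origin (the wedge
   point).  circ j s parametrises it (1-periodically) and fixes its
   orientation: increasing s is the positive direction. *)
Definition circ (j : nat) (s : RR) : RR * RR :=
  (j.+1%:R * (1 - cos (2 * pi * s)), j.+1%:R * sin (2 * pi * s)).

Definition wpt : RR * RR := (0, 0).

Definition wedge (k : nat) : set (RR * RR) :=
  [set z | exists j, (j < k)%N /\ exists s, z = circ j s].

Definition oriented_at (k : nat) (g : RR -> RR * RR) (t0 : RR) : Prop :=
  exists2 e : RR, 0 < e &
   (exists i, (i < k)%N /\ exists phi : RR -> RR,
      [/\ {within `]t0 - e, t0], continuous phi},
          {in `]t0 - e, t0] &, forall u v, u < v -> phi u < phi v} &
          {in `]t0 - e, t0], forall t, g t = circ i (phi t)}]) /\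
   (exists j, (j < k)%N /\ exists psi : RR -> RR,
      [/\ {within `[t0, t0 + e[, continuous psi},
          {in `[t0, t0 + e[ &, forall u v, u < v -> psi u < psi v} &
          {in `[t0, t0 + e[, forall t, g t = circ j (psi t)}]).

Definition positive_map (m k : nat) (f : RR * RR -> RR * RR) : Prop :=
  [/\ {within wedge m, continuous f},
      f @` wedge m = wedge k,
      f wpt = wpt,
      (forall j, (j < m)%N -> forall s, oriented_at k (f \o circ j) s) &
      (forall w, wedge m w -> w <> wpt ->
         exists2 U : set (RR * RR), nbhs w U &
           {in U `&` wedge m &, injective f})].

Definition projection (T : pseudoMetricType RR) (act : RR -> T -> T)
    (k : nat) (p : T -> RR * RR) : Prop :=
  [/\ continuous p,
      p @` setT = wedge k,
      (forall x, exists2 e : RR, 0 < e &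
         {in [set act t x | t in `]- e, e[], injective p}) &
      (forall x, oriented_at k (fun t => p (act t x)) 0)].

Fixpoint fcomp (f : nat -> RR * RR -> RR * RR) (n d : nat) : RR * RR -> RR * RR :=
  match d with
  | 0 => id
  | d'.+1 => fcomp f n d' \o f (n + d')%N
  end.

Definition inv_limit (k : nat -> nat) (f : nat -> RR * RR -> RR * RR)
  : set {ptws nat -> (RR * RR)%type} :=
  [set z | forall i, wedge (k i) (z i) /\ z i = f i (z i.+1)].

(* An expansion of X about xb (indices start at 0 instead of 1). *)
Definition expansion (T : pseudoMetricType RR) (act : RR -> T -> T) (xb : T)
    (k : nat -> nat) (f : nat -> RR * RR -> RR * RR) (p : nat -> T -> RR * RR)
  : Prop :=
  [/\ (forall i, positive_map (k i.+1) (k i) (f i)),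
      (forall i, projection act (k i) (p i)),
      (forall i, p i xb = wpt),
      (forall n d, p n = fcomp f n d.+1 \o p (n + d.+1)%N) &
      let P := fun x : T => ((fun i => p i x) : {ptws nat -> (RR * RR)%type}) in
      [/\ continuous P, injective P, P @` setT = inv_limit k f &
          exists Q : {ptws nat -> (RR * RR)%type} -> T,
            (forall x, Q (P x) = x) /\ {within inv_limit k f, continuous Q}]].

Definition admits_expansion (T : pseudoMetricType RR) (act : RR -> T -> T) (xb : T)
  : Prop := exists k f p, @expansion T act xb k f p.

From HB Require Import structures.
From mathcomp Require Import all_boot all_order all_algebra.
From mathcomp Require Import all_classical all_reals all_analysis.
From mathcomp Require Import Rstruct Rstruct_topology.
From mathcomp Require Import ring lra.

(* The slope z.2 / z.1 of a point z <> wpt of the wedge equals cot (pi s) when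
   z = circ j s, whatever the circle j.  Hence it strictly decreases along every
   positively oriented path that avoids the wedge point.  If the forward orbit of
   y never met p^-1(wpt) for a projection p, the slope would thus decrease along
   the whole forward orbit, which is impossible near a cluster point of the
   orbit, where the orbit keeps returning (compactness).  So every forward orbit
   meets every fibre p_n^-1(wpt); and since the expansion is a homeomorphism onto
   the inverse limit, these fibres shrink to x_bullet, making X dense there. *)

Set Implicit Arguments. Unset Strict Implicit. Unset Printing Implicit Defensive.
Import Order.TTheory GRing.Theory Num.Theory numFieldNormedType.Exports.
Local Open Scope classical_set_scope.
Local Open Scope ring_scope.

Definition wedge_cot (z : RR * RR) : RR := z.2 / z.1.

Lemma circ_half_angle (j : nat) (s : RR) :
  circ j s = (j.+1%:R * (2 * sin (pi * s) ^+ 2),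
              j.+1%:R * (2 * sin (pi * s) * cos (pi * s))).
Proof.
rewrite /circ (_ : 2 * pi * s = pi * s + pi * s); last by ring.
rewrite trigo.cosD trigo.sinD -[X in X - _](cos2Dsin2 (pi * s)).
congr (_, _); ring.
Qed.

Lemma circ_eq_wpt (j : nat) (s : RR) : circ j s = wpt <-> sin (pi * s) = 0.
Proof.
rewrite circ_half_angle /wpt; split => [[+ _] | ->]; last by congr (_, _); ring.
by move/eqP; rewrite !mulf_eq0 pnatr_eq0 orbb pnatr_eq0 /= => /eqP.
Qed.

Lemma wedge_cot_circ (j : nat) (s : RR) :
  sin (pi * s) != 0 -> wedge_cot (circ j s) = cos (pi * s) / sin (pi * s).
Proof.
move=> s_neq0; rewrite circ_half_angle /wedge_cot /=.
have j_neq0 : (j.+1%:R : RR) != 0 by rewrite pnatr_eq0.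
by field; rewrite s_neq0 addrC natr1 j_neq0.
Qed.

Lemma wedge_fst_neq0 (k : nat) (z : RR * RR) : wedge k z -> z <> wpt -> z.1 != 0.
Proof.
case=> j [_ [s ->]] /circ_eq_wpt /eqP s_neq0.
by rewrite circ_half_angle /= !mulf_neq0 ?pnatr_eq0 ?expf_neq0.
Qed.

Lemma sin_pi_sub_gt0 (R : realType) (a b : R) : a < b < a + 1 -> 0 < sin (pi * b - pi * a).
Proof.
move=> /andP[ab ba1]; have pi_pos : 0 < (pi : R) := pi_gt0 _.
apply: sin_gt0_pi; rewrite -mulrBr pmulr_rgt0 ?subr_gt0 //=.
by rewrite -ltr_pdivlMl // mulVf ?gt_eqF //; lra.
Qed.

Lemma wedge_cot_circ_lt (j : nat) (a b : RR) : a < b < a + 1 ->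
  0 < sin (pi * a) * sin (pi * b) -> wedge_cot (circ j b) < wedge_cot (circ j a).
Proof.
move=> ab_lt sin_ab.
have a_neq0 : sin (pi * a) != 0 by apply: contraTneq sin_ab => ->; rewrite mul0r ltxx.
have b_neq0 : sin (pi * b) != 0 by apply: contraTneq sin_ab => ->; rewrite mulr0 ltxx.
rewrite -subr_gt0 !wedge_cot_circ //.
have -> : cos (pi * a) / sin (pi * a) - cos (pi * b) / sin (pi * b)
   = sin (pi * b - pi * a) / (sin (pi * a) * sin (pi * b)).
  by rewrite sinB; field; rewrite a_neq0 b_neq0.
by rewrite divr_gt0 // sin_pi_sub_gt0.
Qed.

Lemma sin_pi_neq0_after_root (R : realType) (a b : R) :
  sin (pi * a) = 0 -> a < b < a + 1 -> sin (pi * b) != 0.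
Proof.
move=> sin_a /sin_pi_sub_gt0; apply: contraTneq => sin_b.
by rewrite sinB sin_a sin_b !mul0r mulr0 subr0 ltxx.
Qed.

Lemma exists_pos_le2 (R : realDomainType) (e1 e2 : R) : 0 < e1 -> 0 < e2 ->
  exists d : R, [/\ 0 < d, d <= e1 & d <= e2].
Proof.
move=> e1_gt0 e2_gt0; exists (Num.min e1 e2).
by rewrite lt_min e1_gt0 e2_gt0 !ge_min !lexx orbT.
Qed.

Definition locally_decreasing_at (R : realType) (F : R -> R) (c : R) : Prop :=
  exists2 e : R, 0 < e & forall s,
    (c - e < s < c -> F c < F s) /\ (c < s < c + e -> F s < F c).

Lemma locally_decreasing_at_shift (R : realType) (F : R -> R) (c : R) :
  locally_decreasing_at (fun s => F (s + c)) 0 -> locally_decreasing_at F c.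
Proof.
case=> e e_gt0 decF; exists e => // s; have [lt_left lt_right] := decF (s - c).
rewrite !subrK !add0r in lt_left lt_right.
by split => /andP[? ?]; [apply: lt_left | apply: lt_right]; apply/andP; split; lra.
Qed.

Lemma lt_locally_decreasing (R : realType) (F : R -> R) (a b : R) :
  (forall c, a <= c <= b -> locally_decreasing_at F c) -> a < b -> F b < F a.
Proof.
move=> decF ab.
pose S := [set c | a <= c <= b /\ forall s, a < s <= c -> F s < F a].
have Sa : S a by split=> [|s /andP[? ?]]; [rewrite lexx ltW | lra].
have supS : has_sup S by split; [exists a | exists b => c [/andP[_ ?] _]].
pose m := sup S.
have ub_m c : S c -> c <= m by apply: sup_upper_bound.
have m_le_b : m <= b by apply: sup_le_ub; [exists a | move=> c [/andP[_ ?] _]].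
have below_m s : a < s < m -> F s < F a.
  move=> /andP[a_s s_m].
  have [c [_ Sc] c_gt] := sup_adherent (eps := m - s) (ltac:(lra)) supS.
  by apply: Sc; apply/andP; split; rewrite -/m in c_gt; lra.
have a_lt_m : a < m.
  have [e e_gt0 decFa] := decF a (ltac:(apply/andP; split; lra)).
  have [d [d_gt0 de db]] := exists_pos_le2 e_gt0 (ltac:(lra) : 0 < b - a).
  suff /ub_m : S (a + d / 2) by lra.
  split=> [|s /andP[? ?]]; first by apply/andP; split; lra.
  by apply: (decFa s).2; apply/andP; split; lra.
have [e e_gt0 decFm] := decF m (ltac:(apply/andP; split; lra)).
have Fm : F m < F a.
  have [d [d_gt0 de dm]] := exists_pos_le2 e_gt0 (ltac:(lra) : 0 < m - a).
  have Fm_lt : F m < F (m - d / 2) by apply: (decFm _).1; apply/andP; split; lra.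
  by apply: lt_trans Fm_lt _; apply: below_m; apply/andP; split; lra.
suff b_eq_m : b = m by rewrite b_eq_m.
apply/eqP; rewrite eq_le m_le_b andbT leNgt; apply/negP => m_lt_b.
have [d [d_gt0 de dm]] := exists_pos_le2 e_gt0 (ltac:(lra) : 0 < b - m).
suff /ub_m : S (m + d / 2) by lra.
split=> [|s /andP[? ?]]; first by apply/andP; split; lra.
have [sm|ms|->] := ltgtP s m; last exact: Fm.
- by apply: below_m; apply/andP; split.
- by apply: lt_trans Fm; apply: (decFm s).2; apply/andP; split; lra.
Qed.

Lemma locally_decreasing_at_near (R : realType) (F : R -> R) (c : R) :
  (\forall s \near c, (s < c -> F c < F s) /\ (c < s -> F s < F c)) ->
  locally_decreasing_at F c.
Proof.
move=> /nbhs_ballP[e e_gt0 near_c]; exists e => // s.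
have near_s : c - e < s < c + e -> (s < c -> F c < F s) /\ (c < s -> F s < F c).
  by rewrite -ltr_distlC; apply: near_c.
by split=> /andP[? ?]; [apply: (near_s _).1 | apply: (near_s _).2] => //;
  apply/andP; split; lra.
Qed.

Lemma param_near_sin_pi (R : realType) (A : set R) (phi : R -> R) (t0 : R) :
  A t0 -> {within A, continuous phi} ->
  \forall t \near within A (nbhs t0),
    phi t0 - 1 < phi t < phi t0 + 1 /\
    (sin (pi * phi t0) != 0 -> 0 < sin (pi * phi t0) * sin (pi * phi t)).
Proof.
move=> A_t0 phi_cont.
have phi_cvg : phi @ within A (nbhs t0) --> phi t0 :=
  (subspace_continuousP A phi).1 phi_cont t0 A_t0.
have sin_cvg : sin (pi * phi t0) * sin (pi * phi t) @[t --> within A (nbhs t0)]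
    --> sin (pi * phi t0) * sin (pi * phi t0).
  apply: cvgMr; apply: continuous_cvg; first exact: continuous_sin.
  exact: cvgMr.
have phi_gt := cvgr_gt _ phi_cvg (phi t0 - 1) (ltac:(lra)).
have phi_lt := cvgr_lt _ phi_cvg (phi t0 + 1) (ltac:(lra)).
have [sin0|sin_neq0] := eqVneq (sin (pi * phi t0)) 0.
  near=> t; split=> //; apply/andP; split; near: t; [exact: phi_gt | exact: phi_lt].
have sin_gt := cvgr_gt _ sin_cvg 0 (ltac:(by rewrite -expr2 exprn_even_gt0)).
near=> t; split=> [|_]; first (apply/andP; split); near: t.
- exact: phi_gt.
- exact: phi_lt.
- exact: sin_gt.
Unshelve. all: by end_near.
Qed.

Lemma oriented_at_locally_decreasing (k : nat) (g : RR -> RR * RR) (t0 : RR) :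
  oriented_at k g t0 -> g t0 <> wpt -> locally_decreasing_at (wedge_cot \o g) t0.
Proof.
case=> e e_gt0 [[i [_ [phi [phi_cont phi_incr g_phi]]]]
                [j [_ [psi [psi_cont psi_incr g_psi]]]]] g_t0.
have t0_left : t0 \in `]t0 - e, t0] by rewrite in_itv /= lexx andbT; lra.
have t0_right : t0 \in `[t0, t0 + e[ by rewrite in_itv /= lexx; lra.
have sin_phi : sin (pi * phi t0) != 0 by apply/eqP; rewrite -(circ_eq_wpt i) -g_phi.
have sin_psi : sin (pi * psi t0) != 0 by apply/eqP; rewrite -(circ_eq_wpt j) -g_psi.
have near_phi := param_near_sin_pi t0_left phi_cont.
have near_psi := param_near_sin_pi t0_right psi_cont.
have near_e : \forall s \near t0, s \in `]t0 - e, t0 + e[.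
  by apply: near_in_itvoo; rewrite in_itv /=; lra.
apply: locally_decreasing_at_near; near=> s.
have : s \in `]t0 - e, t0 + e[ by near: s.
rewrite in_itv /= => /andP[s_gt s_lt].
split=> [s_t0 | t0_s] /=.
- have s_left : s \in `]t0 - e, t0] by rewrite in_itv /= s_gt ltW.
  have [/andP[phi_gt phi_lt] /(_ sin_phi) sin_pos] : phi t0 - 1 < phi s < phi t0 + 1 /\
      (sin (pi * phi t0) != 0 -> 0 < sin (pi * phi t0) * sin (pi * phi s)).
    by move: s_left; near: s; exact: near_phi.
  have := phi_incr s t0 s_left t0_left s_t0.
  rewrite !g_phi // => phi_s_lt; apply: wedge_cot_circ_lt; first (apply/andP; split; lra).
  by rewrite mulrC.
- have s_right : s \in `[t0, t0 + e[ by rewrite in_itv /= s_lt ltW.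
  have [/andP[psi_gt psi_lt] /(_ sin_psi) sin_pos] : psi t0 - 1 < psi s < psi t0 + 1 /\
      (sin (pi * psi t0) != 0 -> 0 < sin (pi * psi t0) * sin (pi * psi s)).
    by move: s_right; near: s; exact: near_psi.
  have := psi_incr t0 s t0_right s_right t0_s.
  rewrite !g_psi // => psi_t0_lt; apply: wedge_cot_circ_lt => //.
  by apply/andP; split; lra.
Unshelve. all: by end_near.
Qed.

Lemma oriented_at_right_neq_wpt (k : nat) (g : RR -> RR * RR) (t0 : RR) :
  oriented_at k g t0 -> exists2 e : RR, 0 < e & forall s, t0 < s < t0 + e -> g s <> wpt.
Proof.
case=> e e_gt0 [_ [j [_ [psi [psi_cont psi_incr g_psi]]]]].
have t0_right : t0 \in `[t0, t0 + e[ by rewrite in_itv /= lexx; lra.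
have near_psi := param_near_sin_pi t0_right psi_cont.
have near_e : \forall s \near t0, s < t0 + e by apply: near_in_itvNyo; rewrite in_itv /=; lra.
suff /nbhs_ballP[d d_gt0 near_t0] : \forall s \near t0, t0 < s -> g s <> wpt.
  exists d => // s /andP[t0_s s_lt]; apply: (near_t0 s) => //.
  by rewrite /ball /= ltr_distlC; apply/andP; split; lra.
near=> s => t0_s.
have s_right : s \in `[t0, t0 + e[ by rewrite in_itv /= ltW //; near: s.
have [/andP[_ psi_lt] sin_pos] : psi t0 - 1 < psi s < psi t0 + 1 /\
    (sin (pi * psi t0) != 0 -> 0 < sin (pi * psi t0) * sin (pi * psi s)).
  by move: s_right; near: s; exact: near_psi.
have psi_gt := psi_incr t0 s t0_right s_right t0_s.
rewrite g_psi // circ_eq_wpt; apply/eqP.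
have [sin0|sin_neq0] := eqVneq (sin (pi * psi t0)) 0.
  by apply: sin_pi_neq0_after_root sin0 _; rewrite psi_gt.
by apply: contraTneq (sin_pos sin_neq0) => ->; rewrite mulr0 ltxx.
Unshelve. all: by end_near.
Qed.

Lemma wedge_cot_continuous (q : RR * RR) : q.1 != 0 -> {for q, continuous wedge_cot}.
Proof. by move=> q1_neq0; apply: cvgM; [exact: cvg_snd | apply: cvgV => //; exact: cvg_fst]. Qed.

Lemma cluster_seq_frequently (T : topologicalType) (u : nat -> T) (z : T) (B : set T) (N : nat) :
  cluster (u @ \oo) z -> nbhs z B -> exists2 n, (N <= n)%N & B (u n).
Proof.
move=> z_cluster z_B.
have tail_N : (u @ \oo) [set u n | n in [set n | (N <= n)%N]].
  by apply: filterS (nbhs_infty_ge N) => n N_n; exists n.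
by have [_ [[n N_n <-] B_un]] := z_cluster _ _ tail_N z_B; exists n.
Qed.

Section ProjectionOrbit.
Variables (T : pseudoMetricType RR) (act : RR -> T -> T) (k : nat) (p : T -> RR * RR).
Hypotheses (act_flow : is_flow act) (p_proj : projection act k p).

Lemma flow_act_continuous (s : RR) : continuous (act s).
Proof.
have [act_cont _ _ _] := act_flow; move=> x.
exact: (cvg_comp _ _ (cvg_pair (cvg_cst s) cvg_id) (act_cont (s, x))).
Qed.

Lemma projection_cot_continuous (s : RR) (x : T) : p (act s x) <> wpt ->
  {for x, continuous (fun x => wedge_cot (p (act s x)))}.
Proof.
have [p_cont p_img _ _] := p_proj => p_neq.
have p_wedge : wedge k (p (act s x)) by rewrite -p_img; exists (act s x).
apply: (continuous_comp (continuous_comp (@flow_act_continuous s x) (p_cont _))).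
exact: wedge_cot_continuous (wedge_fst_neq0 p_wedge p_neq).
Qed.

Lemma projection_cot_decreasing (x : T) (a b : RR) :
  (forall t, a <= t <= b -> p (act t x) <> wpt) -> a < b ->
  wedge_cot (p (act b x)) < wedge_cot (p (act a x)).
Proof.
have [_ act0 actD _] := act_flow; have [_ _ _ orient] := p_proj.
move=> avoid; apply: (lt_locally_decreasing (F := fun t => wedge_cot (p (act t x)))).
move=> c c_in; apply: locally_decreasing_at_shift.
have := oriented_at_locally_decreasing (orient (act c x)).
rewrite act0 => /(_ (avoid c c_in)).
by congr locally_decreasing_at; apply: funext => t /=; rewrite actD.
Qed.

Lemma recurrent_orbit_not_decreasing (h : T -> RR) (y z : T) (s0 s1 : RR) :
  cluster ((fun n : nat => act n%:R y) @ \oo) z -> 0 <= s0 -> s0 < s1 < s0 + 1 ->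
  {for z, continuous (fun x => h (act s0 x))} ->
  {for z, continuous (fun x => h (act s1 x))} ->
  h (act s1 z) < h (act s0 z) ->
  ~ (forall a b, 0 < a -> a < b -> h (act b y) < h (act a y)).
Proof.
move=> z_cluster s0_ge0 /andP[s01 s10] h0_cont h1_cont h_lt h_decr.
have [_ _ actD _] := act_flow.
pose del := (h (act s0 z) - h (act s1 z)) / 3.
have near_z : \forall x \near z,
    h (act s0 z) - del < h (act s0 x) /\ h (act s1 x) < h (act s1 z) + del.
  near=> x; split; near: x.
  - by apply: cvgr_gt h0_cont _ _; rewrite /del; lra.
  - by apply: cvgr_lt h1_cont _ _; rewrite /del; lra.
have [n n_ge1 [_ near_n]] := cluster_seq_frequently 1 z_cluster near_z.
have [m m_gt [near_m _]] := cluster_seq_frequently n.+1 z_cluster near_z.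
rewrite /= !actD in near_n near_m.
have n_ge1' : (1 : RR) <= n%:R by rewrite ler1n.
have m_gt' : (n%:R : RR) + 1 <= m%:R by rewrite natr1 ler_nat.
have := h_decr (s1 + n%:R) (s0 + m%:R) _ _.
rewrite /del in near_n near_m; lra.
Unshelve. all: by end_near.
Qed.

Lemma projection_orbit_hits_wpt (y : T) : compact [set: T] ->
  exists2 t : RR, 0 < t & p (act t y) = wpt.
Proof.
move=> T_compact; apply: contrapT => no_hit.
have [_ _ _ orient] := p_proj.
have [z [_ z_cluster]] : [set: T] `&` cluster ((fun n : nat => act n%:R y) @ \oo) !=set0.
  by apply: T_compact; exact: filterT.
have [e e_gt0 avoid_z] := oriented_at_right_neq_wpt (orient z).
have [d [d_gt0 de d_le1]] := exists_pos_le2 e_gt0 ltr01.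
have avoid_z' t : d / 3 <= t <= d / 2 -> p (act t z) <> wpt.
  by move=> /andP[? ?]; apply: avoid_z; apply/andP; split; lra.
apply: (@recurrent_orbit_not_decreasing (wedge_cot \o p) y z (d / 3) (d / 2)) => //.
- by lra.
- by apply/andP; split; lra.
- by apply: projection_cot_continuous; apply: avoid_z'; apply/andP; split; lra.
- by apply: projection_cot_continuous; apply: avoid_z'; apply/andP; split; lra.
- by apply: projection_cot_decreasing => //; lra.
- move=> a b a_gt0 ab; apply: projection_cot_decreasing => // t /andP[a_t _] hit.
  by apply: no_hit; exists t => //; lra.
Qed.

End ProjectionOrbit.

Lemma cvg_from_left_inverse (T U : topologicalType) (P : T -> U) (Q : U -> T) (A : set U)
    (F : set_system T) {F_filter : Filter F} (x : T) :
  cancel P Q -> (forall y, A (P y)) -> {within A, continuous Q} ->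
  P @ F --> P x -> F --> x.
Proof.
move=> PK PA Q_cont P_cvg.
have Q_cvg : Q @ within A (nbhs (P x)) --> x.
  by rewrite -[x in _ --> x]PK; apply: (subspace_continuousP A Q).1.
have P_within : P @ F --> within A (nbhs (P x)).
  move=> B /P_cvg P_B.
  exact: (filterS (fun y (AB_Py : A (P y) -> B (P y)) => AB_Py (PA y)) P_B).
have := cvg_comp _ _ P_within Q_cvg.
by rewrite (_ : Q \o P = id) //; apply: funext.
Qed.

Lemma fcomp_wpt (f : nat -> RR * RR -> RR * RR) (n d : nat) :
  (forall i, f i wpt = wpt) -> fcomp f n d wpt = wpt.
Proof. by move=> f_wpt; elim: d => //= d IH; rewrite f_wpt. Qed.

Section Expansion.
Variables (T : pseudoMetricType RR) (act : RR -> T -> T) (xb : T).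
Variables (k : nat -> nat) (f : nat -> RR * RR -> RR * RR) (p : nat -> T -> RR * RR).
Hypothesis X_expansion : expansion act xb k f p.

Lemma expansion_fiber_antitone (i n : nat) (x : T) :
  (i <= n)%N -> p n x = wpt -> p i x = wpt.
Proof.
have [f_pos _ _ p_comp _] := X_expansion.
have f_wpt j : f j wpt = wpt by have [] := f_pos j.
rewrite leq_eqVlt => /orP[/eqP -> // | lt_in] pn_x.
have := p_comp i (n - i.+1)%N; rewrite subnSK // subnKC 1?ltnW //.
by move=> /(congr1 (fun g => g x)) /= ->; rewrite pn_x fcomp_wpt.
Qed.

Lemma expansion_fiber_subset (N : set T) : nbhs xb N ->
  exists n, forall x, p n x = wpt -> N x.
Proof.
have [_ _ p_xb _ [_ _ P_img [Q [PK Q_cont]]]] := X_expansion.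
move=> xb_N; apply: contrapT => no_n.
have escape n : exists x, p n x = wpt /\ ~ N x.
  apply: contrapT => all_N; apply: no_n; exists n => x pn_x.
  by apply: contrapT => not_N; apply: all_N; exists x.
have [xs xs_spec] := choice escape.
pose P (x : T) : {ptws nat -> (RR * RR)%type} := fun i => p i x.
have P_cvg : P @ (xs @ \oo) --> P xb.
  apply/pointwise_cvgP => i B xb_B; apply: filterS (nbhs_infty_ge i) => n i_n /=.
  rewrite /P (expansion_fiber_antitone i_n (xs_spec n).1) -(p_xb i).
  exact: nbhs_singleton.
have P_lim y : inv_limit k f (P y) by rewrite -P_img; exists y.
have xs_N : \forall n \near \oo, N (xs n).
  exact: (cvg_from_left_inverse PK P_lim Q_cont P_cvg xb_N).
by have [n] := filter_ex xs_N; apply: (xs_spec n).2.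
Qed.

End Expansion.

Unset Implicit Arguments.

Theorem proposition3p2 (T : pseudoMetricType RR) (act : RR -> T -> T) (xb : T) :
  flow_space act -> ~ dense_at act xb -> ~ admits_expansion act xb.
Proof.
move=> [T_compact _ _ act_flow] not_dense [k [f [p X_expansion]]].
apply: not_dense => N xb_N y.
have [n fiber_N] := expansion_fiber_subset X_expansion xb_N.
have [_ p_proj _ _ _] := X_expansion.
have [t t_gt0 hit] := projection_orbit_hits_wpt act_flow (p_proj n) y T_compact.
by exists t => //; apply: fiber_N.
Qed.
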